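(* The stabilizer of $z^*$ in $G$ is the cyclic subgroup generated by $\exp(\mathrm{ad}\,z^* )$.
   Context: $\mathbb F$ is a field of characteristic zero, $\mathfrak{sl}_2$ the Lie algebra of $2\times2$ trace-zero matrices over $\mathbb F$. Let $x^*=\begin{pmatrix}1&-1\\1&-1\end{pmatrix}$, $y^*=\begin{pmatrix}0&0\\1&0\end{pmatrix}$, $z^*=\begin{pmatrix}0&-1\\0&0\end{pmatrix}$; $G$ is the subgroup of $\mathrm{Aut}_{\mathbb F}(\mathfrak{sl}_2)$ generated by $\exp(\mathrm{ad}\,x^* ),\exp(\mathrm{ad}\,y^* ),\exp(\mathrm{ad}\,z^* )$. *)

From HB Require Import structures.
From mathcomp Require Import all_boot all_order all_algebra.
Set Implicit Arguments. Unset Strict Implicit. Unset Printing Implicit Defensive.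
Import Order.TTheory GRing.Theory Num.Theory.
Local Open Scope ring_scope.

Section SL2.
Variable F : fieldType.

Definition sl2 : pred 'M[F]_2 := fun A => \tr A == 0.

Definition xstar : 'M[F]_2 := \matrix_(i < 2, j < 2)
  (if i == 0 then (if j == 0 then 1 else -1) else (if j == 0 then 1 else -1)).
Definition ystar : 'M[F]_2 := \matrix_(i < 2, j < 2)
  (if (i == 1) && (j == 0) then 1 else 0).
Definition zstar : 'M[F]_2 := \matrix_(i < 2, j < 2)
  (if (i == 0) && (j == 1) then -1 else 0).

(* Linear endomorphisms of 'M[F]_2 are represented by 4x4 matrices acting on
   mxvec (row-vector convention: mxvec A *m lin_mx f = mxvec (f A)). *)
Definition ad (x : 'M[F]_2) : 'M[F]_4 := lin_mx (fun A : 'M[F]_2 => x *m A - A *m x).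

(* exponential of a nilpotent endomorphism of the 4-dimensional space 'M_2:
   the exponential series truncated at the nilpotency bound N^4 = 0 *)
Definition expnil (N : 'M[F]_4) : 'M[F]_4 :=
  \sum_(k < 4) (k`!%:R)^-1 *: N ^+ k.

Definition expad (x : 'M[F]_2) : 'M[F]_4 := expnil (ad x).

Inductive gen_by (S : seq 'M[F]_4) : 'M[F]_4 -> Prop :=
| gen_by1 : gen_by S 1
| gen_byM s g : s \in S -> gen_by S g -> gen_by S (s * g)
| gen_byV s g : s \in S -> gen_by S g -> gen_by S (s^-1 * g).

Definition inG (g : 'M[F]_4) : Prop :=
  gen_by [:: expad xstar; expad ystar; expad zstar] g.

Definition fixes (g : 'M[F]_4) (A : 'M[F]_2) : Prop := mxvec A *m g = mxvec A.

End SL2.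

From HB Require Import structures.
From mathcomp Require Import all_boot all_order all_algebra.
From mathcomp Require Import ring.
Set Implicit Arguments. Unset Strict Implicit. Unset Printing Implicit Defensive.
Import GRing.Theory.
Local Open Scope ring_scope.

(* Write conjmx M N for the endomorphism A |-> M A N of 'M_2 (as a 4x4 matrix);
   then conjmx M N * conjmx P Q = conjmx (P M) (N Q).  Each generator of G is
   exp(ad x) with x*x = 0, and such an exponential equals conjmx (1 + x) (1 - x).
   Since xstar, ystar, zstar have integer entries, every g in G is conjmx M N for
   mutually inverse matrices M, N with integer entries.  If moreover g fixes
   zstar, M commutes with zstar, hence M = a (1 - t zstar), N = a^-1 (1 + t zstar)
   with t = M_01 N_00 an integer, and g is conjugation by zflow t := 1 - t zstar.
   As t |-> zflow t is a one-parameter group and exp(ad zstar) is conjugation by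
   zflow (-1), the power exp(ad zstar)^k is conjugation by zflow (-k), which
   gives both inclusions. *)

Section TwoSidedMultiplication.
Variable F : fieldType.
Implicit Types (g h : 'M[F]_4) (A M N P Q : 'M[F]_2).

Lemma endo_ext g h : (forall A, mxvec A *m g = mxvec A *m h) -> g = h.
Proof.
move=> eq_gh; apply/row_matrixP => i; rewrite !rowE.
by have := eq_gh (@vec_mx F 2 2 (delta_mx 0 i)); rewrite vec_mxK.
Qed.

Definition conjmx M N : 'M[F]_4 := lin_mx (mulmxr N \o mulmx M).

Lemma conjmxE M N A : mxvec A *m conjmx M N = mxvec (M *m A *m N).
Proof. exact: (mul_vec_lin (mulmxr N \o mulmx M) A). Qed.

Lemma conjmxM M N P Q : conjmx M N * conjmx P Q = conjmx (P *m M) (N *m Q).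
Proof.
by apply: endo_ext => A; rewrite -mulmxE mulmxA !conjmxE !mulmxA.
Qed.

Lemma conjmx1 : conjmx 1 1 = 1.
Proof. by apply: endo_ext => A; rewrite conjmxE mul1mx !mulmx1. Qed.

Lemma conjmxV M N : M *m N = 1 -> N *m M = 1 -> (conjmx M N)^-1 = conjmx N M.
Proof.
move=> MN NM.
have left_inv : conjmx N M * conjmx M N = 1 by rewrite conjmxM MN conjmx1.
have right_inv : conjmx M N * conjmx N M = 1 by rewrite conjmxM NM conjmx1.
have unit_g : conjmx M N \is a GRing.unit by apply/unitrP; exists (conjmx N M).
by rewrite -[LHS]mul1r -left_inv -mulrA mulrV // mulr1.
Qed.

Lemma conjmxZ a b M N : a * b = 1 -> conjmx (a *: M) (b *: N) = conjmx M N.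
Proof.
move=> ab; apply: endo_ext => A; rewrite !conjmxE.
by rewrite -scalemxAr -!scalemxAl scalerA mulrC ab scale1r.
Qed.

Lemma fixes_conjmx M N A : fixes (conjmx M N) A <-> M *m A *m N = A.
Proof.
rewrite /fixes conjmxE; split=> [fixA | -> //].
exact: (can_inj (@mxvecK F 2 2) fixA).
Qed.

End TwoSidedMultiplication.

Section TwoByTwo.
Variable F : fieldType.

Lemma mulmx2E (M N : 'M[F]_2) i j : (M *m N) i j = M i 0 * N 0 j + M i 1 * N 1 j.
Proof.
have -> : (1 : 'I_2) = lift 0 0 by apply: val_inj.
by rewrite mxE big_ord_recl big_ord1.
Qed.

Lemma ord2P (i : 'I_2) : i = 0 \/ i = 1.
Proof. by case: i => [[|[|//]] ?]; [left | right]; apply: val_inj. Qed.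

(* A 2x2 matrix of trace 0 and determinant 0 squares to 0 (Cayley-Hamilton). *)
Lemma sq0_2x2 (M : 'M[F]_2) :
  M 0 0 + M 1 1 = 0 -> M 0 0 * M 1 1 = M 0 1 * M 1 0 -> M *m M = 0.
Proof.
move=> /(canRL (addKr _)); rewrite addr0 => tr0 det0.
apply/matrixP => i j; rewrite mulmx2E mxE.
case: (ord2P i) => ->; case: (ord2P j) => ->;
  rewrite ?[M 1 0 * M 0 1]mulrC -?det0 ?tr0; ring.
Qed.

Lemma xstar_sq0 : xstar F *m xstar F = 0.
Proof. by apply: sq0_2x2; rewrite !mxE /= ?addrN ?mulrN1 ?mulN1r ?mul1r. Qed.

Lemma ystar_sq0 : ystar F *m ystar F = 0.
Proof. by apply: sq0_2x2; rewrite !mxE /= ?addr0 ?mul0r ?mulr0. Qed.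

Lemma zstar_sq0 : zstar F *m zstar F = 0.
Proof. by apply: sq0_2x2; rewrite !mxE /= ?addr0 ?mul0r ?mulr0. Qed.

End TwoByTwo.

Section SquareZeroExponential.
Variable F : fieldType.
Implicit Types x A : 'M[F]_2.

Lemma adE x A : mxvec A *m ad x = mxvec (x *m A - A *m x).
Proof. exact: (mul_vec_lin (mulmx x \- mulmxr x) A). Qed.

(* For x*x = 0, (ad x)^2 A = -2 xAx and (ad x)^3 = 0: the series for exp(ad x)
   stops after its quadratic term. *)
Lemma ad_sq0 x A : x *m x = 0 ->
  mxvec A *m ad x ^+ 2 = mxvec (x *m A *m x *- 2) /\ mxvec A *m ad x ^+ 3 = 0.
Proof.
rewrite mulmxE => xx.
have ad2 : mxvec A *m ad x ^+ 2 = mxvec (x *m A *m x *- 2).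
  rewrite expr2 -mulmxE mulmxA !adE !mulmxE.
  rewrite !mulrBr !mulrBl !mulrA xx mul0r -(mulrA A) xx mulr0.
  by rewrite sub0r subr0 -opprD -mulr2n.
split=> //; rewrite exprSr -mulmxE mulmxA ad2 adE !mulmxE.
rewrite mulrN mulNr mulrnAr mulrnAl !mulrA xx !mul0r -!mulrA xx !mulr0.
by rewrite subrr linear0.
Qed.

Lemma expad_sq0 x : 2%:R != 0 :> F -> x *m x = 0 ->
  expad x = conjmx (1 + x) (1 - x).
Proof.
move=> two_nz xx; apply: endo_ext => A.
have [ad2 ad3] := ad_sq0 A xx.
rewrite conjmxE /expad /expnil mulmx_sumr !big_ord_recl big_ord0 /=.
rewrite -!scalemxAr expr0 mulmx1 expr1 adE ad2 ad3 scaler0 addr0.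
rewrite invr1 !scale1r raddfMNn -scaler_nat scalerN scalerA mulVf // scale1r.
have -> : (1 + x) *m A *m (1 - x) = A + (x *m A - A *m x) - x *m A *m x.
  by rewrite mulmxDl mulmxBr !mul1mx !mulmx1 mulmxDl opprD !addrA.
by rewrite addr0 !(raddfD, raddfN, raddfB) !addrA.
Qed.

End SquareZeroExponential.

Section ZstarFlow.
Variable F : fieldType.
Local Notation z := (zstar F).

(* zflow t = exp (- t zstar) = 1 - t zstar, a one-parameter group. *)
Definition zflow (t : F) : 'M[F]_2 := 1 - t *: z.

Lemma zflowD s t : zflow s *m zflow t = zflow (s + t).
Proof.
rewrite /zflow mulmxBl mul1mx mulmxBr mulmx1 -scalemxAl -scalemxAr scalerA zstar_sq0.
by rewrite scaler0 subr0 scalerDl opprD addrA addrAC.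
Qed.

Lemma zflow0 : zflow 0 = 1.
Proof. by rewrite /zflow scale0r subr0. Qed.

Lemma zflowN t : zflow t *m zflow (- t) = 1.
Proof. by rewrite zflowD subrr zflow0. Qed.

Lemma zflow_conj_zstar s t : zflow s *m z *m zflow t = z.
Proof.
rewrite /zflow mulmxBl mul1mx -scalemxAl zstar_sq0 scaler0 subr0.
by rewrite mulmxBr mulmx1 -scalemxAr zstar_sq0 scaler0 subr0.
Qed.

Hypothesis two_nz : 2%:R != 0 :> F.

Lemma expad_zstar : expad z = conjmx (zflow (-1)) (zflow 1).
Proof. by rewrite expad_sq0 ?zstar_sq0 // /zflow scaleN1r opprK scale1r. Qed.

Lemma expad_zstar_exprz (k : int) :
  expad z ^ k = conjmx (zflow (- k%:~R)) (zflow k%:~R).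
Proof.
have expad_zstar_exprn (n : nat) :
    expad z ^+ n = conjmx (zflow (- n%:R)) (zflow n%:R).
  elim: n => [|n IHn]; first by rewrite expr0 oppr0 zflow0 conjmx1.
  rewrite exprS IHn expad_zstar conjmxM !zflowD mulrS opprD.
  by congr (conjmx (zflow _) _); rewrite addrC.
case: k => n; first exact: expad_zstar_exprn.
rewrite NegzE -invr_expz -exprnP expad_zstar_exprn conjmxV ?zflowN //.
  by rewrite intrN opprK.
by rewrite -{2}[_%:R]opprK zflowN.
Qed.

End ZstarFlow.

Section IntegerMatrices.
Variables (F : fieldType) (n : nat).
Implicit Types M N : 'M[F]_n.

Definition intmx M : Prop := exists M' : 'M[int]_n, M = map_mx intr M'.

Lemma intmxP M : intmx M <-> forall i j, exists k : int, M i j = k%:~R.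
Proof.
split=> [[M' ->] i j | intM]; first by exists (M' i j); rewrite mxE.
have int_ij i j : exists k : int, M i j == k%:~R.
  by have [k ->] := intM i j; exists k.
exists (\matrix_(i, j) xchoose (int_ij i j)).
by apply/matrixP => i j; rewrite !mxE; apply/eqP/(xchooseP (int_ij i j)).
Qed.

Lemma intmx1 : intmx 1.
Proof. by exists 1; rewrite map_mx1. Qed.

Lemma intmxD M N : intmx M -> intmx N -> intmx (M + N).
Proof. by move=> [M' ->] [N' ->]; exists (M' + N'); rewrite map_mxD. Qed.

Lemma intmxN M : intmx M -> intmx (- M).
Proof. by move=> [M' ->]; exists (- M'); rewrite map_mxN. Qed.

Lemma intmxM M N : intmx M -> intmx N -> intmx (M *m N).
Proof. by move=> [M' ->] [N' ->]; exists (M' *m N'); rewrite map_mxM. Qed.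

Lemma intmx_signs M : (forall i j, M i j \in [:: 0; 1; -1]) -> intmx M.
Proof.
move=> signs; apply/intmxP => i j; move: (signs i j); rewrite !inE.
by case/or3P=> /eqP ->; [exists 0 | exists 1 | exists (-1)].
Qed.

End IntegerMatrices.

Section IntegralConjugations.
Variable F : fieldType.
Hypothesis two_nz : 2%:R != 0 :> F.

Definition int_conj (g : 'M[F]_4) : Prop :=
  exists M N : 'M[F]_2, [/\ intmx M, intmx N, M *m N = 1, N *m M = 1 & g = conjmx M N].

Lemma int_conj_expad x : x *m x = 0 -> intmx x -> int_conj (expad x).
Proof.
move=> xx int_x; exists (1 + x), (1 - x); rewrite expad_sq0 //.
rewrite !mulmxE in xx *; split=> //.
- by apply: intmxD; [apply: intmx1 | ].
- by apply: intmxD; [apply: intmx1 | apply: intmxN].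
- by rewrite mulrDl !mul1r mulrBr mulr1 xx subr0 subrK.
- by rewrite mulrBl !mul1r mulrDr mulr1 xx addr0 addrK.
Qed.

Lemma int_conj_generators s :
  s \in [:: expad (xstar F); expad (ystar F); expad (zstar F)] -> int_conj s.
Proof.
rewrite !inE => /or3P[] /eqP ->; apply: int_conj_expad;
  rewrite ?xstar_sq0 ?ystar_sq0 ?zstar_sq0 //; apply: intmx_signs => i j;
  by rewrite mxE; do ![case: ifP => _]; rewrite !inE eqxx ?orbT.
Qed.

Lemma int_conj1 : int_conj 1.
Proof. by exists 1, 1; rewrite mulmx1 conjmx1; split=> //; apply: intmx1. Qed.

Lemma int_conjM g h : int_conj g -> int_conj h -> int_conj (g * h).
Proof.
move=> [M [N [iM iN MN NM ->]]] [P [Q [iP iQ PQ QP ->]]].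
exists (P *m M), (N *m Q); rewrite conjmxM; split=> //; try by apply: intmxM.
- by rewrite mulmxA -(mulmxA P) MN mulmx1 PQ.
- by rewrite mulmxA -(mulmxA N) QP mulmx1 NM.
Qed.

Lemma int_conjV g : int_conj g -> int_conj g^-1.
Proof.
move=> [M [N [iM iN MN NM ->]]].
by exists N, M; rewrite conjmxV.
Qed.

Lemma inG_int_conj g : inG g -> int_conj g.
Proof.
elim=> [|s {}g gen_s _ IHg|s {}g gen_s _ IHg]; first exact: int_conj1.
- exact: int_conjM (int_conj_generators gen_s) IHg.
- exact: int_conjM (int_conjV (int_conj_generators gen_s)) IHg.
Qed.

End IntegralConjugations.

Lemma gen_by_exprz (F : fieldType) (S : seq 'M[F]_4) s (k : int) :
  s \in S -> gen_by S (s ^ k).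
Proof.
move=> s_in_S; case: k => n.
  by elim: n => [|n IHn]; [exact: gen_by1 | rewrite exprSz; exact: gen_byM].
rewrite NegzE -invr_expz -exprnP -exprVn.
by elim: n.+1 => [|m IHm]; [exact: gen_by1 | rewrite exprS; exact: gen_byV].
Qed.

Section Stabilizer.
Variable F : fieldType.
Local Notation z := (zstar F).

Lemma commute_zstar (M : 'M[F]_2) : M *m z = z *m M -> M = M 0 0 *: 1 - M 0 1 *: z.
Proof.
move=> Mz; have entry i j : (M *m z) i j = (z *m M) i j by rewrite Mz.
move: (entry 1 1) (entry 0 1); rewrite !mulmx2E !mxE /= !mulr0 !mul0r !addr0 !add0r.
rewrite !mulrN1 !mulN1r => /eqP; rewrite oppr_eq0 => /eqP m10 /oppr_inj m00.
apply/matrixP => i j; rewrite !mxE.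
by case: (ord2P i) => ->; case: (ord2P j) => -> /=; rewrite ?m10 -?m00; ring.
Qed.

Lemma conjmx_fix_zstar (M N : 'M[F]_2) :
  M *m N = 1 -> N *m M = 1 -> M *m z *m N = z ->
  conjmx M N = conjmx (zflow (M 0 1 * N 0 0)) (zflow (- (M 0 1 * N 0 0))).
Proof.
move=> MN NM fixz.
have Mz : M *m z = z *m M by rewrite -[in RHS]fixz -!mulmxA NM mulmx1.
have EM := commute_zstar Mz.
have m10 : M 1 0 = 0 by rewrite EM !mxE /=; ring.
have na : N 0 0 * M 0 0 = 1.
  have : (N *m M) 0 0 = (1 : 'M[F]_2) 0 0 by rewrite NM.
  by rewrite mulmx2E m10 mulr0 addr0 mxE.
set a := M 0 0 in EM na *; set b := M 0 1 in EM *; set n := N 0 0 in na *.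
have EM' : M = a *: zflow (b * n).
  by rewrite {1}EM /zflow scalerBr scalerA mulrCA [a * n]mulrC na mulr1.
have EN : N = n *: zflow (- (b * n)).
  have MX : M *m (n *: zflow (- (b * n))) = 1.
    by rewrite EM' -scalemxAl -scalemxAr scalerA mulrC na scale1r zflowN.
  by have := congr1 (mulmx N) MX; rewrite mulmxA NM mul1mx mulmx1.
by rewrite EM' EN conjmxZ // mulrC.
Qed.
End Stabilizer.

Theorem theorem6p6 (F : fieldType) (charF0 : [pchar F] =i pred0) (g : 'M[F]_4) :
  (inG g /\ fixes g (zstar F)) <-> exists k : int, g = expad (zstar F) ^ k.
Proof.
have two_nz : 2%:R != 0 :> F by rewrite (pcharf0P F).1.
split.
- case=> /(inG_int_conj two_nz) [M [N [intM intN MN NM ->]]] /fixes_conjmx fixz.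
  have [b Mb] := (intmxP M).1 intM 0 1; have [n Nn] := (intmxP N).1 intN 0 0.
  exists (- (b * n)); rewrite conjmx_fix_zstar // expad_zstar_exprz //.
  by rewrite Mb Nn intrN opprK intrM.
- case=> k ->; split; first by apply: gen_by_exprz; rewrite !inE eqxx !orbT.
  by rewrite expad_zstar_exprz //; apply/fixes_conjmx; apply: zflow_conj_zstar.
Qed.
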